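(* Let $S\subset\mathbb{R}^n_+$ be compact and convex with $0\in S$. Let $a\in\mathbb{C}^n\setminus\mathbb{C}^{*n}$, $a\neq0$, let $J=\{j_1<\dots<j_\ell\}\subset\{1,\dots,n\}$ be the set of indices $j$ with $a_j\neq0$, and let $S_J\subseteq\mathbb{R}^\ell$ be the set of all $t\in\mathbb{R}^\ell$ such that the point $s\in\mathbb{R}^n_+$ defined by $s_{j_k}=t_k$ ($k=1,\dots,\ell$) and $s_j=0$ for $j\notin J$ belongs to $S$. Then $$H_S(a)=H_{S_J}(a_{j_1},\dots,a_{j_\ell}).$$
   Context: $\mathbb{R}_+=[0,\infty)$, $\mathbb{C}^{*n}=(\mathbb{C}\setminus\{0\})^n$. For a compact set $T\subset\mathbb{R}^k_+$ with $0\in T$, $\varphi_T(\xi)=\max_{t\in T}\langle t,\xi\rangle$ and the logarithmic supporting function $H_T\colon\mathbb{C}^k\to\mathbb{R}_+$ is $H_T(z)=\varphi_T(\log|z_1|,\dots,\log|z_k|)$ for $z\in\mathbb{C}^{*k}$ and $H_T(z)=\limsup_{\mathbb{C}^{*k}\ni w\to z}H_T(w)$ for $z\in\mathbb{C}^k\setminus\mathbb{C}^{*k}$. *)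

From HB Require Import structures.
From mathcomp Require Import all_boot all_order all_algebra.
From mathcomp Require Import all_classical all_reals all_analysis.
From mathcomp Require Import complex.
Set Implicit Arguments. Unset Strict Implicit. Unset Printing Implicit Defensive.
Import Order.TTheory GRing.Theory Num.Theory.
Import numFieldNormedType.Exports.
Local Open Scope classical_set_scope.
Local Open Scope ring_scope.

Section Defs.
Variable R : realType.

Definition cabs (z : R[i]) : R := Normc.normc z.

Definition Cstar (k : nat) (z : 'I_k -> R[i]) : Prop := forall j, z j != 0.

(* phi_T(xi) = max_{t in T} <t, xi>  (a sup, attained for compact nonempty T) *)
Definition phiT (k : nat) (T : set 'rV[R]_k) (xi : 'I_k -> R) : \bar R :=
  ereal_sup [set (\sum_(i < k) t ord0 i * xi i)%:E | t in T].

Definition HTstar (k : nat) (T : set 'rV[R]_k) (z : 'I_k -> R[i]) : \bar R :=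
  phiT T (fun j => ln (cabs (z j))).

(* H_T on C^k: on C^{*k} as above, elsewhere the limsup over w in C^{*k}, w -> z *)
Definition HT (k : nat) (T : set 'rV[R]_k) (z : 'I_k -> R[i]) : \bar R :=
  if pselect (Cstar z) then HTstar T z
  else ereal_inf [set ereal_sup [set HTstar T w | w in
                     [set w | Cstar w /\ forall j, cabs (w j - z j) < r]]
                 | r in [set r : R | 0 < r]].

(* S_J: points t in R^|J| whose extension by zero (s_{j_k} = t_k, s_j = 0 off J,
   with j_1 < ... < j_l the increasing enumeration of J) lies in S *)
Definition SJ (n : nat) (S : set 'rV[R]_n) (J : {set 'I_n}) : set 'rV[R]_#|J| :=
  [set t | exists s, S s /\ (forall k : 'I_#|J|, s ord0 (enum_val k) = t ord0 k)
                         /\ (forall j, j \notin J -> s ord0 j = 0)].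

End Defs.
Arguments SJ {R n} S J _.

From HB Require Import structures.
From mathcomp Require Import all_boot all_order all_algebra.
From mathcomp Require Import all_classical all_reals all_analysis.
From mathcomp Require Import complex.
From mathcomp Require Import lra.
Set Implicit Arguments. Unset Strict Implicit. Unset Printing Implicit Defensive.
Import Order.TTheory GRing.Theory Num.Theory.
Import numFieldNormedType.Exports.
Local Open Scope classical_set_scope.
Local Open Scope ring_scope.

(* Near a point a with zero coordinates, H_S(a) is governed by
   sup_{s in S} <s, log|w|> for w in C^{*n} close to a.  On the support J of a,
   log|w_j| exceeds log|a_j| by O(|w - a|), uniformly on the compact set S.
   Off J, log|w_j| tends to -oo, and by compactness the points of S whose
   J-part <s, log|a|> is at least c > H_{S_J}(a_J) carry a mass off J bounded
   below, so these coordinates push their values below c.  Conversely, the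
   points of S supported in J are the extensions by zero of S_J, and replacing
   the zero coordinates of a by small positive numbers gives the reverse
   inequality. *)

Section RealFacts.
Variable R : realType.

Lemma ln_le_lnD_div (x y d : R) :
  0 < x -> 0 < y -> y <= x + d -> ln y <= ln x + d / x.
Proof.
move=> x0 y0 yxd.
have yx0 : 0 < y / x by rewrite divr_gt0.
have ln_yx : ln (y / x) <= y / x - 1.
  by have := @le_ln1Dx R (y / x - 1); rewrite [1 + _]addrC subrK; apply; lra.
have yx_d : y / x - 1 <= d / x.
  rewrite -[1](divff (lt0r_neq0 x0)) -mulrBl.
  by apply: ler_wpM2r; [rewrite invr_ge0 ltW | lra].
by move: ln_yx; rewrite ln_div ?posrE //; lra.
Qed.

Lemma lee_from_above (x y : \bar R) :
  (forall c e : R, (y < c%:E)%E -> 0 < e -> (x <= (c + e)%:E)%E) -> (x <= y)%E.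
Proof.
case: y => [y| |] hxy.
- apply/lee_addgt0Pr => e e0; rewrite -EFinD [e in y + e]splitr addrA.
  by apply: hxy; rewrite ?lte_fin ?ltrDl ?divr_gt0.
- exact: leey.
- have x_le c : (x <= c%:E)%E by rewrite -[c](subrK 1); apply: hxy; rewrite ?ltNyr.
  case: x {hxy} x_le => [x| |] x_le //; last by have := x_le 0.
  by have := x_le (x - 1); rewrite lee_fin => ?; exfalso; lra.
Qed.

Lemma continuous_rV_linear n (P : pred 'I_n) (c : 'I_n -> R) :
  continuous (fun s : 'rV[R]_n => \sum_(j | P j) s ord0 j * c j).
Proof.
apply: continuous_big => [|j _ s]; first exact: add_continuous.
exact: (@cvgMr_tmp R _ _ (nbhs_filter s) _ _ (c j)
  (@coord_continuous R 1 n ord0 j s)).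
Qed.

Lemma continuous_rV_sum n (P : pred 'I_n) :
  continuous (fun s : 'rV[R]_n => \sum_(j | P j) s ord0 j).
Proof.
have -> : (fun s : 'rV[R]_n => \sum_(j | P j) s ord0 j) =
          (fun s => \sum_(j | P j) s ord0 j * 1).
  by apply/funext => s; under [RHS]eq_bigr do rewrite mulr1.
exact: continuous_rV_linear.
Qed.

Lemma compact_continuous_pos_lb (T : topologicalType) (K : set T) (g : T -> R) :
  compact K -> continuous g -> (forall s, K s -> 0 < g s) ->
  exists2 eta, 0 < eta & forall s, K s -> eta <= g s.
Proof.
move=> cK gc gpos; have [->|/set0P K0] := eqVneq K set0; first by exists 1.
have [m Km gm] := compact_EVT_min K0 cK (continuous_subspaceT gc).
rewrite inE in Km; exists (g m) => [|s Ks]; first exact: gpos.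
by apply: gm; rewrite inE.
Qed.

Lemma cabs_ge0 (z : R[i]) : 0 <= cabs z.
Proof. by case: z => x y; rewrite /cabs sqrtr_ge0. Qed.

Lemma cabs_gt0 (z : R[i]) : z != 0 -> 0 < cabs z.
Proof.
move=> z0; rewrite lt_def cabs_ge0 andbT; apply/eqP => /Normc.eq0_normc.
exact/eqP.
Qed.

Lemma cabs_real (x : R) : cabs x%:C%C = `|x|.
Proof. by rewrite /cabs /= expr0n /= addr0 sqrtr_sqr. Qed.

Lemma cabs_le_addB (w z : R[i]) : cabs w <= cabs z + cabs (w - z).
Proof. by have := le_normcD z (w - z); rewrite addrC subrK. Qed.

End RealFacts.

Section HTBoundary.
Variables (R : realType) (k : nat) (T : set 'rV[R]_k) (z : 'I_k -> R[i]).

Lemma HT_star : Cstar z -> HT T z = HTstar T z.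
Proof. by move=> zs; rewrite /HT; case: pselect. Qed.

Hypothesis z_notstar : ~ Cstar z.

Lemma HT_nstar_ge (x : \bar R) :
  (forall r, 0 < r -> exists2 w, Cstar w /\ (forall j, cabs (w j - z j) < r)
                               & (x <= HTstar T w)%E) ->
  (x <= HT T z)%E.
Proof.
move=> hx; rewrite /HT; case: pselect => [/z_notstar[] | _ /=].
apply: le_ereal_inf_tmp => _ [r r0 <-]; have [w wnear xw] := hx r r0.
by apply: le_ereal_sup_tmp; exists (HTstar T w) => //; exists w.
Qed.

Lemma HT_nstar_le (c : R) :
  (exists2 r, 0 < r & forall w, Cstar w -> (forall j, cabs (w j - z j) < r) ->
     forall t, T t -> \sum_(i < k) t ord0 i * ln (cabs (w i)) <= c) ->
  (HT T z <= c%:E)%E.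
Proof.
move=> [r r0 hr]; rewrite /HT; case: pselect => [/z_notstar[] | _ /=].
apply: ge_ereal_inf; eexists; first by exists r.
apply: ge_ereal_sup => _ [w [wstar wnear] <-].
by apply: ge_ereal_sup => _ [t Tt <-]; rewrite lee_fin hr.
Qed.

End HTBoundary.

Section Restriction.
Variables (R : realType) (n : nat) (J : {set 'I_n}) (s : 'rV[R]_n) (x : 'I_n -> R).

Lemma sum_restricted_row (t : 'rV[R]_#|J|) :
  (forall k, s ord0 (enum_val k) = t ord0 k) ->
  \sum_(k < #|J|) t ord0 k * x (enum_val k) = \sum_(j in J) s ord0 j * x j.
Proof. by move=> st; rewrite [RHS]big_enum_val; apply: eq_bigr => k _; rewrite st. Qed.

Lemma sum_supported_row : (forall j, j \notin J -> s ord0 j = 0) ->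
  \sum_(j < n) s ord0 j * x j = \sum_(j in J) s ord0 j * x j.
Proof.
move=> s0; rewrite (bigID (mem J)) /= [X in _ + X]big1 ?addr0 //.
by move=> j /s0 ->; rewrite mul0r.
Qed.

End Restriction.

Section Support.
Variables (R : realType) (n : nat) (S : set 'rV[R]_n) (a : 'I_n -> R[i]).
Local Notation J := [set j : 'I_n | a j != 0]%SET.
Local Notation b := (fun k : 'I_#|J| => a (enum_val k)).

Lemma HTstar_SJ_le_HT : ~ Cstar a -> (HTstar (SJ S J) b <= HT S a)%E.
Proof.
move=> a_nstar; apply: HT_nstar_ge => // r r0.
pose w j := if a j != 0 then a j else (r / 2)%:C%C.
have r2 : 0 < r / 2 by rewrite divr_gt0.
have wJ (k : 'I_#|J|) : w (enum_val k) = a (enum_val k).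
  by rewrite /w; have := enum_valP k; rewrite inE => ->.
exists w; first split.
- move=> j; rewrite /w; case: ifP => // _.
  by rewrite eq_complex /= negb_and gt_eqF.
- move=> j; rewrite /w; case: ifPn => [_|/negPn/eqP ->].
    by rewrite subrr /cabs Normc.normc0.
  by rewrite subr0 cabs_real gtr0_norm // ltr_pdivrMr // ltr_pMr // ltr1n.
apply: ge_ereal_sup => _ [t [s [Ss [st s0]]] <-].
apply: le_ereal_sup_tmp; exists (\sum_(j < n) s ord0 j * ln (cabs (w j)))%:E.
  by exists s.
under eq_bigr do rewrite -wJ.
rewrite lee_fin (sum_restricted_row (fun j => ln (cabs (w j))) st).
by rewrite (sum_supported_row _ s0).
Qed.

Section UpperBound.
Hypotheses (S_compact : compact S) (S0 : S 0)
  (S_ge0 : forall s, S s -> forall i, 0 <= s ord0 i).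

Let f (s : 'rV[R]_n) := \sum_(j in J) s ord0 j * ln (cabs (a j)).
Let g (s : 'rV[R]_n) := \sum_(j | j \notin J) s ord0 j.

Lemma support_value_le_HTstar s : S s -> (forall j, j \notin J -> s ord0 j = 0) ->
  ((f s)%:E <= HTstar (SJ S J) b)%E.
Proof.
move=> Ss s0; apply: le_ereal_sup_tmp; exists (f s)%:E => //.
exists (\row_k s ord0 (enum_val k)).
  by exists s; split => //; split => // k; rewrite mxE.
by rewrite (@sum_restricted_row _ _ _ s (fun j => ln (cabs (a j)))) => // k;
  rewrite mxE.
Qed.

Let f_continuous : continuous f.
Proof. exact: continuous_rV_linear. Qed.

Let g_continuous : continuous g.
Proof. exact: continuous_rV_sum. Qed.

Let g_ge0 s : S s -> 0 <= g s.
Proof. by move=> Ss; apply: sumr_ge0 => j _; exact: S_ge0. Qed.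

Lemma off_support_mass_lb (c : R) :
  (forall s, S s -> (forall j, j \notin J -> s ord0 j = 0) -> f s < c) ->
  exists2 eta, 0 < eta & forall s, S s -> c <= f s -> eta <= g s.
Proof.
move=> fc.
have K_compact : compact (S `&` [set s | c <= f s]).
  apply: compact_closedI => //.
  apply: (@preimage_closed _ _ f [set x | c <= x]); last exact: closed_ge.
  by move=> s _; exact: f_continuous.
have [|eta eta0 heta] := compact_continuous_pos_lb K_compact g_continuous.
  move=> s [Ss /= cf]; rewrite lt_def g_ge0 // andbT; apply/eqP => g0.
  have s0 : forall j, j \notin J -> s ord0 j = 0.
    by apply: psumr_eq0P g0 => j _; exact: S_ge0.
  by have := fc s Ss s0; rewrite ltNge cf.
by exists eta => // s Ss cf; apply: heta.
Qed.

Lemma near_support_bound (e : R) : 0 < e ->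
  exists2 r, 0 < r & forall w, Cstar w -> (forall j, cabs (w j - a j) < r) ->
    forall s, S s -> \sum_(j in J) s ord0 j * ln (cabs (w j)) <= f s + e.
Proof.
move=> e0.
pose mass (s : 'rV[R]_n) := \sum_(j in J) s ord0 j.
have mass_continuous : continuous mass by exact: continuous_rV_sum.
have [|s1 /[!inE] Ss1 mass_le] :=
  compact_EVT_max _ S_compact (continuous_subspaceT mass_continuous).
  by exists 0.
pose B := mass s1; pose Q := \sum_(j in J) (cabs (a j))^-1.
have B0 : 0 <= B by apply: sumr_ge0 => j _; exact: S_ge0.
have Q0 : 0 <= Q by apply: sumr_ge0 => j _; rewrite invr_ge0 cabs_ge0.
pose r := e / ((Q + 1) * (B + 1)).
have r0 : 0 < r by rewrite divr_gt0 // mulr_gt0 // ltr_wpDl.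
exists r => // w w_star w_near s Ss.
have term j : j \in J -> s ord0 j * ln (cabs (w j)) <=
                         s ord0 j * ln (cabs (a j)) + s ord0 j * (r * Q).
  rewrite inE => aj; rewrite -mulrDr; apply: ler_wpM2l; first exact: S_ge0.
  have a_gt0 := cabs_gt0 aj.
  apply: (le_trans (ln_le_lnD_div a_gt0 (cabs_gt0 (w_star j)) _)).
    by apply: (le_trans (cabs_le_addB (w j) (a j))); rewrite lerD2l ltW.
  rewrite lerD2l; apply: ler_wpM2l; first exact: ltW.
  by rewrite /Q (bigD1 j) ?inE //= lerDl sumr_ge0 // => i _; rewrite invr_ge0 cabs_ge0.
apply: (le_trans (ler_sum _ term)); rewrite big_split /= -mulr_suml lerD2l.
have mass_s : mass s <= B by apply: mass_le; rewrite inE.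
have mass0 : 0 <= mass s by apply: sumr_ge0 => j _; exact: S_ge0.
have QB : Q * mass s <= (Q + 1) * (B + 1) by nra.
have -> : e = r * ((Q + 1) * (B + 1)).
  by rewrite divfK // gt_eqF // mulr_gt0 // ltr_wpDl.
rewrite -/(mass s); nra.
Qed.

Lemma off_support_bound (M : R) w s : S s -> Cstar w ->
  (forall j, j \notin J -> cabs (w j) < expR (- M)) ->
  \sum_(j | j \notin J) s ord0 j * ln (cabs (w j)) <= - (M * g s).
Proof.
move=> Ss w_star w_small; rewrite /g mulr_sumr -sumrN; apply: ler_sum => j jJ.
rewrite -mulNr mulrC; apply: ler_wpM2r; first exact: S_ge0.
rewrite -[X in _ <= X]expRK ltW // ltr_ln ?posrE ?expR_gt0 ?cabs_gt0 //.
exact: w_small.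
Qed.

Lemma HT_le_of_support_bound (c e : R) : ~ Cstar a -> 0 < e ->
  (forall s, S s -> (forall j, j \notin J -> s ord0 j = 0) -> f s < c) ->
  (HT S a <= (c + e)%:E)%E.
Proof.
move=> a_nstar e0 fc.
have [eta eta0 g_gap] := off_support_mass_lb fc.
have [r1 r10 near_J] := near_support_bound e0.
have [|s1 /[!inE] Ss1 f_le] :=
  compact_EVT_max _ S_compact (continuous_subspaceT f_continuous).
  by exists 0.
(* the mass [g s >= eta] off the support then pays for any excess [f s - c] *)
pose M := `|f s1 - c| / eta.
have M0 : 0 <= M by rewrite divr_ge0 // ltW.
apply: HT_nstar_le => //; exists (Num.min r1 (expR (- M))) => [|w w_star w_near s Ss].
  by rewrite lt_min r10 expR_gt0.
have w_near_J j : cabs (w j - a j) < r1.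
  by apply: (lt_le_trans (w_near j)); rewrite ge_min lexx.
have w_small j : j \notin J -> cabs (w j) < expR (- M).
  rewrite inE negbK => /eqP aj0; have := w_near j.
  by rewrite aj0 subr0 lt_min => /andP[].
rewrite (bigID (mem J)) /=.
have J_part := near_J w w_star w_near_J s Ss.
have off_part := off_support_bound Ss w_star w_small.
have Mg0 := mulr_ge0 M0 (g_ge0 Ss).
have [cf|] := leP c (f s); last lra.
have excess_le : f s - c <= M * g s.
  have f_le_s1 := f_le s (mem_set Ss).
  have : `|f s1 - c| = M * eta by rewrite divfK // gt_eqF.
  have := ler_norm (f s1 - c); have := ler_wpM2l M0 (g_gap s Ss cf); lra.
lra.
Qed.

End UpperBound.
End Support.

Theorem proposition3p3 (R : realType) (n : nat) (S : set 'rV[R]_n)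
  (S_compact : compact S)
  (S_convex : convex_set (S : set (convex_lmodType 'rV[R]_n)))
  (S0 : S 0)
  (S_pos : forall s, S s -> forall i, 0 <= s ord0 i)
  (a : 'I_n -> R[i])
  (a_notstar : ~ Cstar a)
  (a_neq0 : exists j, a j != 0) :
  HT S a = HT (SJ S [set j : 'I_n | a j != 0]%SET) (fun k => a (enum_val k)).
Proof.
rewrite [RHS]HT_star; last by move=> k; have := enum_valP k; rewrite inE.
apply/eqP; rewrite eq_le HTstar_SJ_le_HT // andbT.
apply: lee_from_above => c e Lc e0.
apply: HT_le_of_support_bound => // s Ss s0.
by rewrite -lte_fin (le_lt_trans (support_value_le_HTstar Ss s0)).
Qed.
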